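(* Assume the setting below with $Y_i(0)=0$ for all $i=1,\dots,N$. Fix $1\le k\le N$ and $c\in\mathbb{R}$, and define $$p^{\mathrm H}_{k,c} \equiv G_{\mathrm H}\big(n(c);\,N,\,N-k,\,N_1\big).$$ Then $p^{\mathrm H}_{k,c}$ is a valid $p$-value for testing the null hypothesis $H_{k,c}:\ \tau_{(k)}\le c$. That is, whenever $H_{k,c}$ holds, $\Pr\big(p^{\mathrm H}_{k,c}\le\alpha\big)\le\alpha$ for every $\alpha\in(0,1)$. Here the probability is over the random assignment $Z$.
   Context: Setting: - There are $N$ units. Each unit $i$ has fixed (non-random) potential outcomes $Y_i(1),Y_i(0)\in\mathbb{R}$ and individual treatment effect (ITE) $\tau_i=Y_i(1)-Y_i(0)$. - The sorted ITEs are $\tau_{(1)}\le\tau_{(2)}\le\dots\le\tau_{(N)}$. - Completely randomized experiment (CRE): for a fixed $1\le N_1<N$, the assignment vector $Z=(Z_1,\dots,Z_N)\in\{0,1\}^N$ is uniformly distributed over all vectors with exactly $N_1$ ones. Unit $i$ is treated if $Z_i=1$. - The observed outcome is $Y_i=Z_iY_i(1)+(1-Z_i)Y_i(0)$. - For $c\in\mathbb{R}$, let $N(c)=\sum_{i=1}^N\mathbb{1}(\tau_i>c)$ and $n(c)=\sum_{i=1}^N Z_i\mathbb{1}(Y_i>c)$. - The null hypothesis $H_{k,c}$ is $\tau_{(k)}\le c$, which is equivalent to $N(c)\le N-k$. - $G_{\mathrm H}(x;N,n,N_1)=\Pr(X\ge x)$, where $X$ is Hypergeometric with parameters $(N,n,N_1)$: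 the number of marked items in a simple random sample of size $N_1$ drawn without replacement from a population of $N$ items, of which $n$ are marked. *)

From HB Require Import structures.
From mathcomp Require Import all_boot all_order all_algebra.
Set Implicit Arguments. Unset Strict Implicit. Unset Printing Implicit Defensive.
Import Order.TTheory GRing.Theory Num.Theory.
Local Open Scope ring_scope.

Section Defs.
Variable R : realFieldType.
Variable N : nat.

Definition ite (Y1 Y0 : 'I_N -> R) (i : 'I_N) : R := Y1 i - Y0 i.

(* k-th smallest ITE, tau_(k), 1-based k *)
Definition tau_ord (Y1 Y0 : 'I_N -> R) (k : nat) : R :=
  nth 0 (sort <=%R [seq ite Y1 Y0 i | i <- enum 'I_N]) k.-1.

Definition assignment := {ffun 'I_N -> bool}.
Definition cre_support (N1 : nat) : {set assignment} :=
  [set z : assignment | #|[set i | z i]| == N1].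

Definition cre_prob (N1 : nat) (E : pred assignment) : R :=
  #|[set z in cre_support N1 | E z]|%:R / #|cre_support N1|%:R.

Definition obs (Y1 Y0 : 'I_N -> R) (z : assignment) (i : 'I_N) : R :=
  if z i then Y1 i else Y0 i.

Definition n_stat (Y1 Y0 : 'I_N -> R) (c : R) (z : assignment) : nat :=
  #|[set i | z i && (c < obs Y1 Y0 z i)]|.

End Defs.

(* G_H(x; N, n, N1) = Pr(X >= x), X ~ Hypergeometric(N, n, N1):
   pmf P(X = j) = C(n,j) C(N-n, N1-j) / C(N, N1), j = 0..N1 *)
Definition G_H (R : realFieldType) (x Ntot n N1 : nat) : R :=
  \sum_(j < N1.+1 | (x <= j)%N)
     ('C(n, j) * 'C(Ntot - n, N1 - j))%:R / 'C(Ntot, N1)%:R.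

Definition pH (R : realFieldType) (N : nat) (Y1 Y0 : 'I_N -> R) (N1 k : nat) (c : R)
  (z : assignment N) : R :=
  G_H R (n_stat Y1 Y0 c z) N (N - k) N1.

From HB Require Import structures.
From mathcomp Require Import all_boot all_order all_algebra.
Import Order.TTheory GRing.Theory Num.Theory.

(* Under H_{k,c} at most N - k units have tau_i > c, and with Y_i(0) = 0 these
   are exactly the units with Y_i(1) > c.  Enlarge this set to a set T of
   exactly N - k units; then n(c) <= |Z /\ T|, and |Z /\ T| is hypergeometric
   with parameters (N, N - k, N1), so P(|Z /\ T| >= x) = G_H(x).  If x0 is the
   least x with G_H(x) <= alpha, then p <= alpha forces n(c) >= x0, hence
   |Z /\ T| >= x0, an event of probability G_H(x0) <= alpha. *)

Lemma setUI_disjoint (T : finType) (A B C : {set T}) :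
  A \subset C -> B \subset ~: C -> (A :|: B) :&: C = A.
Proof.
move=> sAC sBC'; rewrite setIUl (setIidPl sAC).
by rewrite disjoint_setI0 ?setU0 // disjoints_subset.
Qed.

Lemma setUD_disjoint (T : finType) (A B C : {set T}) :
  A \subset C -> B \subset ~: C -> (A :|: B) :\: C = B.
Proof.
move=> sAC sBC'; rewrite setDUl.
have /eqP -> : A :\: C == set0 by rewrite setD_eq0.
by rewrite set0U; apply/setDidPl; rewrite disjoints_subset.
Qed.

Lemma card_draws_meet (U : finType) (T : {set U}) (m j : nat) : (j <= m)%N ->
  #|[set A : {set U} | #|A| == m & #|A :&: T| == j]| =
  ('C(#|T|, j) * 'C(#|U| - #|T|, m - j))%N.
Proof.
move=> le_jm.
pose parts A : {set U} * {set U} := (A :&: T, A :\: T).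
have parts_inj : injective parts.
  by apply: (can_inj (g := fun p => p.1 :|: p.2)) => A; apply: setID.
rewrite -(card_imset _ parts_inj).
have -> : parts @: [set A : {set U} | #|A| == m & #|A :&: T| == j] =
    setX [set B : {set U} | B \subset T & #|B| == j]
         [set B : {set U} | B \subset ~: T & #|B| == m - j].
  apply/setP => -[B1 B2]; rewrite !inE /=; apply/imsetP/idP => [[A]|].
    rewrite inE => /andP[/eqP cardA /eqP cardAT] [-> ->].
    by rewrite subsetIr subsetDr cardAT -cardA -(cardsID T A) cardAT addKn !eqxx.
  move=> /andP[/andP[sB1 /eqP cardB1] /andP[sB2 /eqP cardB2]].
  exists (B1 :|: B2); last by rewrite /parts setUI_disjoint // setUD_disjoint.
  rewrite inE -(cardsID T (B1 :|: B2)) setUI_disjoint // setUD_disjoint //.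
  by rewrite cardB1 cardB2 subnKC // !eqxx.
by rewrite cardsX !cards_draws -(cardsC T) addKn.
Qed.

Lemma card_assignment_sets (U : finType) (P : pred {set U}) :
  #|[set z : {ffun U -> bool} | P [set i | z i]]| = #|[set A | P A]|.
Proof.
have setK : cancel (fun z : {ffun U -> bool} => [set i | z i]) (fun A => [ffun i => i \in A]).
  by move=> z; apply/ffunP => i; rewrite ffunE inE.
rewrite -(card_imset _ (can_inj setK)); apply: eq_card => A.
rewrite inE; apply/imsetP/idP => [[z]|PA]; first by rewrite inE => Pz ->.
have ffunK : [set i | [ffun i => i \in A] i] = A by apply/setP => i; rewrite inE ffunE.
by exists [ffun i => i \in A]; rewrite ?inE ffunK.
Qed.

Local Open Scope ring_scope.

Lemma count_gt_sorted (R : realDomainType) (s : seq R) (k : nat) (c : R) :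
  sorted <=%R s -> (0 < k <= size s)%N -> nth 0 s k.-1 <= c ->
  (count (fun x => (c < x)%R) s <= size s - k)%N.
Proof.
move=> s_sorted /andP[k_gt0 k_le] nth_le.
have count_take : count (fun x => c < x) (take k s) = 0%N.
  apply/eqP; rewrite -leqn0 leqNgt -has_count -all_predC; apply/(all_nthP 0) => i.
  rewrite size_takel // => lt_ik; rewrite nth_take //= -leNgt; apply: le_trans nth_le.
  apply: (sorted_leq_nth le_trans lexx 0 s_sorted); rewrite ?inE.
  - exact: leq_trans lt_ik k_le.
  - by rewrite prednK.
  - by rewrite -ltnS prednK.
rewrite -{1}(cat_take_drop k s) count_cat count_take add0n -size_drop.
exact: count_size.
Qed.

Lemma card_ite_gt_tau_ord (R : realFieldType) (N : nat) (Y1 Y0 : 'I_N -> R)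
    (k : nat) (c : R) :
  (0 < k <= N)%N -> tau_ord Y1 Y0 k <= c ->
  (#|[set i | (c < ite Y1 Y0 i)%R]| <= N - k)%N.
Proof.
move=> k_range tau_le.
set s := sort <=%R [seq ite Y1 Y0 i | i <- enum 'I_N].
have size_s : size s = N by rewrite size_sort size_map size_enum_ord.
have -> : #|[set i | c < ite Y1 Y0 i]| = count (fun x => c < x) s.
  rewrite (permP (permEl (perm_sort _ _))) count_map.
  by rewrite cardsE cardE enumT /enum_mem size_filter.
rewrite -size_s; apply: count_gt_sorted; rewrite ?size_s //.
exact: (sort_sorted (@le_total _ R) _).
Qed.

Lemma exists_card_superset (T : finType) (S : {set T}) (n : nat) :
  (#|S| <= n <= #|T|)%N -> exists2 A : {set T}, S \subset A & #|A| = n.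
Proof.
case/andP=> le_Sn le_nT.
have : (0 < #|[set B : {set T} | B \subset ~: S & #|B| == n - #|S|]|)%N.
  by rewrite cards_draws bin_gt0 (cardsCs (~: S)) setCK leq_sub2r.
case/card_gt0P => B; rewrite inE => /andP[sBS' /eqP cardB].
exists (S :|: B); first exact: subsetUl.
by rewrite cardsU disjoint_setI0 ?cards0 ?subn0 ?cardB ?subnKC // disjoints_subset subsetC.
Qed.

Lemma n_stat_meet (R : realFieldType) (N : nat) (Y1 Y0 : 'I_N -> R) (c : R)
    (z : assignment N) :
  n_stat Y1 Y0 c z = #|[set i | z i] :&: [set i | c < Y1 i]|.
Proof. by apply: eq_card => i; rewrite !inE /obs; case: (z i). Qed.

Lemma cre_prob_le (R : realFieldType) (N N1 : nat) (E F : pred (assignment N)) :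
  (forall z, E z -> F z) -> cre_prob R N1 E <= cre_prob R N1 F.
Proof.
move=> EF; rewrite /cre_prob ler_wpM2r ?invr_ge0 // ler_nat.
by apply/subset_leq_card/subsetP => z; rewrite !inE => /andP[-> /EF].
Qed.

Lemma G_H_eq0 (R : realFieldType) (Ntot n N1 : nat) : G_H R N1.+1 Ntot n N1 = 0.
Proof. by rewrite /G_H big1 // => j; rewrite leqNgt ltn_ord. Qed.

Lemma cre_prob_meet_tail (R : realFieldType) (N N1 x : nat) (T : {set 'I_N}) :
  cre_prob R N1 (fun z : assignment N => (x <= #|[set i | z i] :&: T|)%N) =
  G_H R x N #|T| N1.
Proof.
pose X (z : assignment N) := #|[set i | z i] :&: T|.
have card_support : #|cre_support N N1| = 'C(N, N1).
  have /= card_eq := @card_assignment_sets _ (fun A : {set 'I_N} => #|A| == N1).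
  by rewrite /cre_support card_eq card_draws card_ord.
have X_le z : z \in cre_support N N1 -> (X z <= N1)%N.
  by rewrite inE => /eqP <-; apply/subset_leq_card/subsetIl.
have card_tail : #|[set z in cre_support N N1 | (x <= X z)%N]| =
    (\sum_(j < N1.+1 | x <= j) 'C(#|T|, j) * 'C(N - #|T|, N1 - j))%N.
  rewrite -sum1_card (partition_big (fun z => inord (X z) : 'I_N1.+1)
    (fun j : 'I_N1.+1 => x <= j)%N) /=; last first.
    by move=> z; rewrite inE => /andP[zS le_xX]; rewrite inordK // ltnS X_le.
  apply: eq_bigr => j le_xj; rewrite sum1_card.
  transitivity #|[set z : assignment N | #|[set i | z i]| == N1 & X z == j]|.
    apply: eq_card => z; rewrite unfold_in /= !inE.
    case: eqP => //= cardZ.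
    have X_lt : (X z < N1.+1)%N by rewrite ltnS X_le // inE cardZ.
    apply/andP/eqP => [[_ /eqP <-]|Xj]; first by rewrite inordK.
    by rewrite Xj le_xj; split=> //; apply/eqP/val_inj; rewrite /= inordK // Xj.
  have /= card_eq := @card_assignment_sets _
    (fun A : {set 'I_N} => (#|A| == N1) && (#|A :&: T| == j)).
  by rewrite card_eq card_draws_meet ?card_ord // -ltnS.
by rewrite /cre_prob card_support card_tail /G_H natr_sum mulr_suml.
Qed.

Section TailPvalue.
Variables (R : realFieldType) (N N1 : nat) (G : nat -> R) (X n : assignment N -> nat).
Hypothesis tail_X : forall x, cre_prob R N1 (fun z => x <= X z)%N <= G x.
Hypothesis n_le_X : forall z, (n z <= X z)%N.

Lemma cre_prob_tail_pvalue (alpha : R) : (exists x, G x <= alpha) ->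
  cre_prob R N1 (fun z => G (n z) <= alpha) <= alpha.
Proof.
move=> exG; case: (ex_minnP exG) => x0 Gx0_le x0_min.
apply: le_trans Gx0_le; apply: le_trans (tail_X x0); apply: cre_prob_le => z.
by move=> /x0_min le_x0n; apply: leq_trans le_x0n (n_le_X z).
Qed.

End TailPvalue.

Theorem proposition1 (R : realFieldType) (N N1 : nat) (Y1 Y0 : 'I_N -> R)
  (k : nat) (c : R) :
  (1 <= N1)%N -> (N1 < N)%N ->
  (forall i, Y0 i = 0) ->
  (1 <= k)%N -> (k <= N)%N ->
  tau_ord Y1 Y0 k <= c ->
  forall alpha : R, 0 < alpha -> alpha < 1 ->
    @cre_prob R N N1 (fun z => pH Y1 Y0 N1 k c z <= alpha) <= alpha.
Proof.
move=> _ _ Y0_0 k_gt0 k_le tau_le alpha alpha_gt0 _.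
set S := [set i | c < Y1 i].
have card_S : (#|S| <= N - k)%N.
  have -> : S = [set i | c < ite Y1 Y0 i].
    by apply/setP => i; rewrite !inE /ite Y0_0 subr0.
  by apply: card_ite_gt_tau_ord; rewrite ?k_gt0.
have [T sST card_T] : exists2 T : {set 'I_N}, S \subset T & #|T| = (N - k)%N.
  by apply: exists_card_superset; rewrite card_S card_ord leq_subr.
apply: (@cre_prob_tail_pvalue R N N1 (fun x => G_H R x N (N - k) N1)
    (fun z => #|[set i | z i] :&: T|) (n_stat Y1 Y0 c)) => [x|z|].
- by rewrite cre_prob_meet_tail card_T.
- by rewrite n_stat_meet; apply/subset_leq_card/setIS.
- by exists N1.+1; rewrite G_H_eq0 ltW.
Qed.
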